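(* Let $(\mathcal{A},\mu,\alpha)$ be a multiplicative Hom-alternative superalgebra. Then for all homogeneous $x,y,z,t\in\mathcal{A}$, $\widetilde{as}(tx,\alpha(y),\alpha(z))-(-1)^{|t|(|x|+|y|+|z|)}\widetilde{as}(xy,\alpha(z),\alpha(t))+(-1)^{(|t|+|x|)(|y|+|z|)}\widetilde{as}(yz,\alpha(t),\alpha(x))=\alpha^{2}(t)\widetilde{as}(x,y,z)+\widetilde{as}(t,x,y)\alpha^{2}(z)$.
   Context: $\mathcal{A}=\mathcal{A}_0\oplus\mathcal{A}_1$ is a $\mathbb{Z}_2$-graded vector space over an algebraically closed field $\mathbb{K}$ of characteristic $0$; $|x|$ is the parity of homogeneous $x$; we write $\mu(x,y)=xy$, $\mu$ even bilinear, $\alpha$ even linear. $\widetilde{as}(x,y,z)=(xy)\alpha(z)-\alpha(x)(yz)$. A Hom-alternative superalgebra is a triple $(\mathcal{A},\mu,\alpha)$ with $\widetilde{as}(x,y,z)+(-1)^{|x||y|}\widetilde{as}(y,x,z)=0$ and $\widetilde{as}(x,y,z)+(-1)^{|y||z|}\widetilde{as}(x,z,y)=0$ for all homogeneous $x,y,z$; multiplicative means $\alpha(xy)=\alpha(x)\alpha(y)$. *)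

From HB Require Import structures.
From mathcomp Require Import all_boot all_order all_algebra.
Set Implicit Arguments. Unset Strict Implicit. Unset Printing Implicit Defensive.
Import GRing.Theory.
Local Open Scope ring_scope.

(* Z_2-graded vector space structure on V: A false = A_0, A true = A_1,
   both subspaces, with V = A_0 (+) A_1 (direct sum). *)
Definition z2_graded (K : fieldType) (V : lmodType K) (A : bool -> {pred V}) :=
  [/\ (forall i, 0 \in A i),
      (forall i (a : K) (u v : V), u \in A i -> v \in A i -> a *: u + v \in A i),
      (forall v : V, exists u w, [/\ u \in A false, w \in A true & v = u + w])
    & (forall v : V, v \in A false -> v \in A true -> v = 0)].

Definition even_bilinear (K : fieldType) (V : lmodType K) (A : bool -> {pred V})
    (mu : V -> V -> V) :=
  [/\ (forall (a : K) x y z, mu (a *: x + y) z = a *: mu x z + mu y z),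
      (forall (a : K) x y z, mu x (a *: y + z) = a *: mu x y + mu x z)
    & (forall i j x y, x \in A i -> y \in A j -> mu x y \in A (i (+) j))].

Definition even_linear (K : fieldType) (V : lmodType K) (A : bool -> {pred V})
    (alpha : V -> V) :=
  (forall (a : K) x y, alpha (a *: x + y) = a *: alpha x + alpha y) /\
  (forall i x, x \in A i -> alpha x \in A i).

Definition has_tilde (V : zmodType) (mu : V -> V -> V) (alpha : V -> V) (x y z : V) :=
  mu (mu x y) (alpha z) - mu (alpha x) (mu y z).

Definition hom_alternative_super (K : fieldType) (V : lmodType K)
    (A : bool -> {pred V}) (mu : V -> V -> V) (alpha : V -> V) :=
  forall (i j k : bool) (x y z : V), x \in A i -> y \in A j -> z \in A k ->
    has_tilde mu alpha x y z + ((-1 : K) ^+ (i * j)%N) *: has_tilde mu alpha y x z = 0 /\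
    has_tilde mu alpha x y z + ((-1 : K) ^+ (j * k)%N) *: has_tilde mu alpha x z y = 0.

Definition hom_multiplicative (V : Type) (mu : V -> V -> V) (alpha : V -> V) :=
  forall x y, alpha (mu x y) = mu (alpha x) (alpha y).

From HB Require Import structures.
From mathcomp Require Import all_boot all_order all_algebra.
Import GRing.Theory.
Local Open Scope ring_scope.
Set Implicit Arguments. Unset Strict Implicit. Unset Printing Implicit Defensive.

(* The left-hand side is, up to signs, a sum of three associators whose
   arguments can be rotated by super-skew-symmetry so that all of them begin
   with [alpha t] or end with [alpha z]; it then becomes the Hom-version of
   the Teichmüller identity, which holds in every multiplicative Hom-algebra
   and expands to a cancellation of eight products. *)

Lemma signr_odd_eq (R : pzRingType) (m n : nat) :
  odd m = odd n -> (-1 : R) ^+ m = (-1) ^+ n.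
Proof. by move=> e; rewrite -[LHS]signr_odd e signr_odd. Qed.

Section HomTeichmuller.

Variables (V : zmodType) (mu : V -> V -> V) (alpha : V -> V).
Hypothesis mulBl : forall w, {morph mu^~ w : u v / u - v}.
Hypothesis mulBr : forall w, {morph mu w : u v / u - v}.
Hypothesis alphaM : hom_multiplicative mu alpha.

Lemma has_tilde_teichmuller (t x y z : V) :
  has_tilde mu alpha (mu t x) (alpha y) (alpha z)
  - has_tilde mu alpha (alpha t) (mu x y) (alpha z)
  + has_tilde mu alpha (alpha t) (alpha x) (mu y z)
  = mu (alpha (alpha t)) (has_tilde mu alpha x y z)
    + mu (has_tilde mu alpha t x y) (alpha (alpha z)).
Proof.
rewrite /has_tilde !alphaM mulBl mulBr.
have rearrange (a b c d e : V) : (a - b) - (c - d) + (b - e) = (d - e) + (a - c).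
  by rewrite opprB (addrC (a - b)) -addrA [a - b + _]addrA subrK addrACA [RHS]addrACA (addrC (-c)).
exact: rearrange.
Qed.

End HomTeichmuller.

Section SuperAlternative.

Variables (K : fieldType) (V : lmodType K) (A : bool -> {pred V}).
Variables (mu : V -> V -> V) (alpha : V -> V).
Hypothesis homalt : hom_alternative_super A mu alpha.

Lemma has_tilde_rotate (i j k : bool) (a b c : V) :
  a \in A i -> b \in A j -> c \in A k ->
  has_tilde mu alpha a b c =
  ((-1 : K) ^+ (i * j)%N * (-1) ^+ (i * k)%N) *: has_tilde mu alpha b c a.
Proof.
move=> ha hb hc.
have [/eqP + _] := homalt ha hb hc; rewrite addr_eq0 => /eqP ->.
have [_ /eqP] := homalt hb ha hc; rewrite addr_eq0 => /eqP ->.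
by rewrite scalerN opprK scalerA.
Qed.

End SuperAlternative.

Theorem mainTheorem14 (K : closedFieldType) (V : lmodType K)
  (A : bool -> {pred V}) (mu : V -> V -> V) (alpha : V -> V) :
  [pchar K] =i pred0 ->
  z2_graded A -> even_bilinear A mu -> even_linear A alpha ->
  hom_alternative_super A mu alpha -> hom_multiplicative mu alpha ->
  forall (pt px py pz : bool) (t x y z : V),
    t \in A pt -> x \in A px -> y \in A py -> z \in A pz ->
    has_tilde mu alpha (mu t x) (alpha y) (alpha z)
    - ((-1 : K) ^+ (pt * (px + py + pz))%N) *: has_tilde mu alpha (mu x y) (alpha z) (alpha t)
    + ((-1 : K) ^+ ((pt + px) * (py + pz))%N) *: has_tilde mu alpha (mu y z) (alpha t) (alpha x)
    = mu (alpha (alpha t)) (has_tilde mu alpha x y z)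
      + mu (has_tilde mu alpha t x y) (alpha (alpha z)).
Proof.
move=> _ _ [mulDl mulDr mul_even] [_ alpha_even] homalt alphaM pt px py pz t x y z ht hx hy hz.
have mulBl w : {morph mu^~ w : u v / u - v}.
  by move=> u v; rewrite -scaleN1r addrC mulDl addrC scaleN1r.
have mulBr w : {morph mu w : u v / u - v}.
  by move=> u v; rewrite -scaleN1r addrC mulDr addrC scaleN1r.
have hxy := mul_even _ _ _ _ hx hy; have hyz := mul_even _ _ _ _ hy hz.
have hat := alpha_even _ _ ht; have hax := alpha_even _ _ hx.
have haz := alpha_even _ _ hz.
have rotate_xy : ((-1 : K) ^+ (pt * (px + py + pz))%N)
    *: has_tilde mu alpha (mu x y) (alpha z) (alpha t)
    = has_tilde mu alpha (alpha t) (mu x y) (alpha z).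
  rewrite (has_tilde_rotate homalt hat hxy haz) -exprD; congr (_ *: _).
  apply: signr_odd_eq.
  by rewrite !(oddD, oddM, oddb); case: (pt).
have rotate_yz : ((-1 : K) ^+ ((pt + px) * (py + pz))%N)
    *: has_tilde mu alpha (mu y z) (alpha t) (alpha x)
    = has_tilde mu alpha (alpha t) (alpha x) (mu y z).
  rewrite (has_tilde_rotate homalt hyz hat hax) scalerA -!exprD -[RHS]scale1r.
  congr (_ *: _); rewrite -(expr0 (-1 : K)); apply: signr_odd_eq.
  by rewrite !(oddD, oddM, oddb); case: (pt); case: (px); case: (py); case: (pz).
rewrite rotate_xy rotate_yz.
exact: has_tilde_teichmuller.
Qed.
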